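(* For every field $K$, the set $\widetilde{K}$ is a subfield of $K$.
   Context: Let $K$ be a field. For $r\in K$, a finite set $A(r)$ with $\{r\}\subseteq A(r)\subseteq K$ is called adequate for $r$ if every mapping $f:A(r)\to K$ satisfying (1) if $1\in A(r)$ then $f(1)=1$; (2) if $a,b\in A(r)$ and $a+b\in A(r)$ then $f(a+b)=f(a)+f(b)$; (3) if $a,b\in A(r)$ and $a\cdot b\in A(r)$ then $f(a\cdot b)=f(a)\cdot f(b)$, also satisfies $f(r)=r$. $\widetilde{K}$ denotes the set of all $r\in K$ for which some finite set adequate for $r$ exists. *)

From mathcomp Require Import all_boot all_algebra.
Set Implicit Arguments. Unset Strict Implicit. Unset Printing Implicit Defensive.
Import GRing.Theory.
Local Open Scope ring_scope.

(* A finite subset A of K is represented by a list [A : seq K].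
   A mapping f : A -> K is represented by a total function K -> K whose
   values outside A are irrelevant (all conditions only mention points of A). *)
Definition adequate_cond (K : fieldType) (A : seq K) (f : K -> K) : Prop :=
  [/\ (1 \in A -> f 1 = 1),
      (forall a b, a \in A -> b \in A -> a + b \in A -> f (a + b) = f a + f b)
    & (forall a b, a \in A -> b \in A -> a * b \in A -> f (a * b) = f a * f b)].

Definition adequate (K : fieldType) (r : K) (A : seq K) : Prop :=
  r \in A /\ forall f : K -> K, adequate_cond A f -> f r = r.

Definition Ktilde (K : fieldType) (r : K) : Prop :=
  exists A : seq K, adequate r A.

Definition is_subfield (K : fieldType) (S : K -> Prop) : Prop :=
  S 0 /\ S 1 /\
  (forall x y, S x -> S y -> S (x + y)) /\
  (forall x, S x -> S (- x)) /\
  (forall x y, S x -> S y -> S (x * y)) /\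
  (forall x, S x -> x != 0 -> S x^-1).

(* Adequacy is monotone: a map respecting the operations on a larger finite set
   respects them on a subset, so it still fixes every element whose adequate set
   lies inside. Hence for x, y in Ktilde, the union of their adequate sets with
   the few elements needed to write x + y, -x, x * y or x^-1 (and 0, 1) is
   adequate for the new element: any such map fixes x and y, hence the result. *)
From mathcomp Require Import all_boot all_algebra.
Import GRing.Theory.
Local Open Scope ring_scope.

Section Adequate.
Variable K : fieldType.
Implicit Types (r x y : K) (A B : seq K) (f : K -> K).

Lemma adequate_cond_sub {A B} f :
  {subset A <= B} -> adequate_cond B f -> adequate_cond A f.
Proof.
move=> sAB [f1 fD fM]; split.
- by move/sAB.
- by move=> a b /sAB aB /sAB bB /sAB abB; apply: fD.
- by move=> a b /sAB aB /sAB bB /sAB abB; apply: fM.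
Qed.

Lemma adequate_fix r A B f :
  adequate r A -> {subset A <= B} -> adequate_cond B f -> f r = r.
Proof. by move=> [_ fixA] sAB /(adequate_cond_sub _ sAB) /fixA. Qed.

Lemma adequate_cond_fix0 A f : 0 \in A -> adequate_cond A f -> f 0 = 0.
Proof.
move=> A0 [_ fD _]; have := fD 0 0 A0 A0; rewrite addr0 => /(_ A0) f00.
by move/(congr1 (fun z => z - f 0)): f00; rewrite subrr addrK.
Qed.

Lemma Ktilde_extend (xs C : seq K) r :
  (forall x, x \in xs -> Ktilde x) -> r \in C ->
  (forall f, adequate_cond C f -> {in xs, forall x, f x = x} -> f r = r) ->
  Ktilde r.
Proof.
elim: xs C => [|x xs IHxs] C xsK rC fixC.
  by exists C; split=> // f /fixC; apply.
have [A adA] := xsK x (mem_head x xs).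
apply: (IHxs (A ++ C)) => [z zxs | | f fAC fxs].
- by apply: xsK; rewrite inE zxs orbT.
- by rewrite mem_cat rC orbT.
apply: fixC => [|z].
  by apply: adequate_cond_sub fAC => z zC; rewrite mem_cat zC orbT.
rewrite inE => /predU1P[-> | /fxs //].
by apply: adequate_fix adA _ fAC => w wA; rewrite mem_cat wA.
Qed.

Lemma Ktilde0 : Ktilde (0 : K).
Proof.
apply: (@Ktilde_extend [::] [:: 0]) => // [|f fC _].
  by rewrite mem_head.
by apply: adequate_cond_fix0 fC; rewrite mem_head.
Qed.

Lemma Ktilde1 : Ktilde (1 : K).
Proof.
apply: (@Ktilde_extend [::] [:: 1]) => // [|f [f1 _ _] _].
  by rewrite mem_head.
by apply: f1; rewrite mem_head.
Qed.

Lemma KtildeD x y : Ktilde x -> Ktilde y -> Ktilde (x + y).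
Proof.
move=> xK yK; apply: (@Ktilde_extend [:: x; y] [:: x; y; x + y]).
- by move=> z; rewrite !inE => /orP[] /eqP->.
- by rewrite !inE eqxx !orbT.
move=> f [_ fD _] fxy; rewrite fD ?inE ?eqxx ?orbT //.
by rewrite !fxy // !inE eqxx ?orbT.
Qed.

Lemma KtildeN x : Ktilde x -> Ktilde (- x).
Proof.
move=> xK; apply: (@Ktilde_extend [:: x] [:: x; - x; 0]).
- by move=> z; rewrite inE => /eqP->.
- by rewrite !inE eqxx orbT.
move=> f fC fx; have [_ fD _] := fC; have fxx : f x = x := fx x (mem_head x [::]).
have f0 : f 0 = 0 by apply: adequate_cond_fix0 fC; rewrite !inE eqxx !orbT.
have : f (x - x) = f x + f (- x) by apply: fD; rewrite !inE ?subrr ?eqxx ?orbT.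
by rewrite subrr f0 fxx => /esym /(canRL (addKr x)); rewrite addr0.
Qed.

Lemma KtildeM x y : Ktilde x -> Ktilde y -> Ktilde (x * y).
Proof.
move=> xK yK; apply: (@Ktilde_extend [:: x; y] [:: x; y; x * y]).
- by move=> z; rewrite !inE => /orP[] /eqP->.
- by rewrite !inE eqxx !orbT.
move=> f [_ _ fM] fxy; rewrite fM ?inE ?eqxx ?orbT //.
by rewrite !fxy // !inE eqxx ?orbT.
Qed.

Lemma KtildeV x : x != 0 -> Ktilde x -> Ktilde x^-1.
Proof.
move=> x0 xK; apply: (@Ktilde_extend [:: x] [:: x; x^-1; 1]).
- by move=> z; rewrite inE => /eqP->.
- by rewrite !inE eqxx orbT.
move=> f [f1 _ fM] fx; have fxx : f x = x := fx x (mem_head x [::]).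
have : f (x * x^-1) = f x * f x^-1 by apply: fM; rewrite !inE ?divff ?eqxx ?orbT.
rewrite divff // f1 ?inE ?eqxx ?orbT // fxx.
by move=> /esym /(canRL (mulKf x0)); rewrite mulr1.
Qed.

End Adequate.

Theorem theorem1 (K : fieldType) : is_subfield (@Ktilde K).
Proof.
do !split.
- exact: Ktilde0.
- exact: Ktilde1.
- exact: KtildeD.
- exact: KtildeN.
- exact: KtildeM.
- by move=> x xK x0; apply: KtildeV.
Qed.
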